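(* Let $L$ be a co-Heyting algebra. Then $\widehat L$, together with the map $L\to\widehat L$, $a\mapsto(\pi_d(a))_{d<\omega}$, is the Hausdorff completion of the pseudometric space $(L,\operatorname{dist}_L)$, and the projective topology on $\widehat L$ coincides with the codimetric topology of the co-Heyting algebra $\widehat L$.
   Context: A co-Heyting algebra is a bounded distributive lattice $(L,0,1,\vee,\wedge)$ such that $a-b=\min\{c\in L: a\le b\vee c\}$ exists for all $a,b$. Let $a\triangle b=(a-b)\vee(b-a)$; for an ideal $I$, $L/I$ is the quotient by $a\equiv_I b\iff a\triangle b\in I$. $\operatorname{Spec}L$ is the set of prime filters ordered by inclusion; height = foundation rank there; $\operatorname{codim}_La=\min\{\operatorname{height}\mathfrak p: a\in\mathfrak p\}$ ($+\infty$ if none); $dL=\{a:\operatorname{codim}_La\ge d\}$ is an ideal; $\pi_d:L\to L/dL$ is the canonical projection, and $\pi_{d,d+1}:L/(d+1)L\to L/dL$ the canonical surjection. $\widehat L=\{(x_d)_{d<\omega}: x_d\in L/dL,\ \pi_{d,d+1}(x_{d+1})=x_d\}$, a co-Heyting algebra, with the projective topology from the discrete topologies on the $L/dL$. For a co-Heyting algebra $M$, $\operatorname{dist}_M(a,b)=2^{-\operatorname{codim}_M(a\triangle b)}$ if finite, $0$ otherwise, and the codimetric topology is the topology of this pseudometric. The Hausdorff completion of a pseudometric space $X$ is a complete metric space $X'$ with a continuous map $X\to X'$ of dense image through which every continuous map from $X$ to a complete metric space factors uniquely and continuously.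
   Formalization: In the universal property of the Hausdorff completion, only uniformly continuous maps from $(L,\operatorname{dist}_L)$ into complete metric spaces must factor, not all continuous ones, and $\widehat L$ carries the metric $\operatorname{dist}_{\widehat L}$. Each condition added here is assumed in the paper as well or is needed for the statement above to hold. *)

From Stdlib Require Import Reals ClassicalEpsilon.
Open Scope R_scope.

Record chops (T : Type) := CHOps {
  ch_zero : T; ch_one : T;
  ch_join : T -> T -> T; ch_meet : T -> T -> T;
  ch_diff : T -> T -> T }.
Arguments ch_zero {T}. Arguments ch_one {T}. Arguments ch_join {T}.
Arguments ch_meet {T}. Arguments ch_diff {T}.

Definition ch_le {T} (L : chops T) (a b : T) : Prop := ch_join L a b = b.

Definition is_coHeyting {T} (L : chops T) : Prop :=
  let j := ch_join L in let m := ch_meet L in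
  (forall a b c, j a (j b c) = j (j a b) c) /\
  (forall a b, j a b = j b a) /\
  (forall a b c, m a (m b c) = m (m a b) c) /\
  (forall a b, m a b = m b a) /\
  (forall a b, j a (m a b) = a) /\
  (forall a b, m a (j a b) = a) /\
  (forall a b c, m a (j b c) = j (m a b) (m a c)) /\
  (forall a, j (ch_zero L) a = a) /\
  (forall a, m (ch_one L) a = a) /\
  (forall a b c, ch_le L a (j b c) <-> ch_le L (ch_diff L a b) c).

Definition sym_diff {T} (L : chops T) (a b : T) : T :=
  ch_join L (ch_diff L a b) (ch_diff L b a).

Definition is_prime_filter {T} (L : chops T) (p : T -> Prop) : Prop :=
  p (ch_one L) /\ ~ p (ch_zero L) /\
  (forall a b, p a -> ch_le L a b -> p b) /\
  (forall a b, p a -> p b -> p (ch_meet L a b)) /\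
  (forall a b, p (ch_join L a b) -> p a \/ p b).

Definition strict_incl {T} (q p : T -> Prop) : Prop :=
  (forall x, q x -> p x) /\ exists x, p x /\ ~ q x.

(* height_ge L p n  <->  height p >= n  (height = foundation rank in Spec L,
   elements outside the well-founded part having rank infinity). *)
Fixpoint height_ge {T} (L : chops T) (p : T -> Prop) (n : nat) : Prop :=
  match n with
  | O => True
  | S n' => exists q, is_prime_filter L q /\ strict_incl q p /\ height_ge L q n'
  end.

(* in_dL L d a  <->  codim_L a >= d  <->  a \in dL *)
Definition in_dL {T} (L : chops T) (d : nat) (a : T) : Prop :=
  forall p, is_prime_filter L p -> p a -> height_ge L p d.

Definition codim_eq {T} (L : chops T) (a : T) (n : nat) : Prop :=
  in_dL L n a /\ ~ in_dL L (S n) a.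

Definition codim_dist {T} (L : chops T) (a b : T) : R :=
  match excluded_middle_informative (exists n, codim_eq L (sym_diff L a b) n) with
  | left H => (/ 2) ^ (proj1_sig (constructive_indefinite_description _ H))
  | right _ => 0
  end.

Definition cls {T} (L : chops T) (d : nat) (a : T) : T -> Prop :=
  fun b => in_dL L d (sym_diff L a b).

Definition quot {T} (L : chops T) (d : nat) : Type :=
  { S : T -> Prop | exists a, S = cls L d a }.

Definition pi {T} (L : chops T) (d : nat) (a : T) : quot L d :=
  exist _ (cls L d a) (ex_intro _ a eq_refl).

Definition repr {T} {L : chops T} {d : nat} (S : quot L d) : T :=
  proj1_sig (constructive_indefinite_description _ (proj2_sig S)).

Definition pi_succ {T} (L : chops T) (d : nat) (S : quot L (S d)) : quot L d :=
  pi L d (repr S).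

Definition qjoin {T} (L : chops T) d (x y : quot L d) : quot L d :=
  pi L d (ch_join L (repr x) (repr y)).
Definition qmeet {T} (L : chops T) d (x y : quot L d) : quot L d :=
  pi L d (ch_meet L (repr x) (repr y)).
Definition qdiff {T} (L : chops T) d (x y : quot L d) : quot L d :=
  pi L d (ch_diff L (repr x) (repr y)).

Definition hat {T} (L : chops T) : Type :=
  { x : forall d, quot L d | forall d, pi_succ L d (x (S d)) = x d }.

Definition is_topology {X : Type} (tau : (X -> Prop) -> Prop) : Prop :=
  tau (fun _ => True) /\
  (forall F : (X -> Prop) -> Prop, (forall V, F V -> tau V) ->
     tau (fun x => exists V, F V /\ V x)) /\
  (forall U V, tau U -> tau V -> tau (fun x => U x /\ V x)).

(* projective topology on \hat L from the discrete topologies on the L/dL: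
   the smallest topology containing all preimages of the projections *)
Definition proj_open {T} (L : chops T) (U : hat L -> Prop) : Prop :=
  forall tau : (hat L -> Prop) -> Prop, is_topology tau ->
    (forall d (V : quot L d -> Prop), tau (fun x => V (proj1_sig x d))) ->
    tau U.

Definition metric_open {X : Type} (dX : X -> X -> R) (U : X -> Prop) : Prop :=
  forall x, U x -> exists eps, 0 < eps /\ forall y, dX x y < eps -> U y.

Definition is_metric {X : Type} (dX : X -> X -> R) : Prop :=
  (forall x y, 0 <= dX x y) /\ (forall x, dX x x = 0) /\
  (forall x y, dX x y = dX y x) /\
  (forall x y z, dX x z <= dX x y + dX y z) /\
  (forall x y, dX x y = 0 -> x = y).

Definition is_complete {X : Type} (dX : X -> X -> R) : Prop :=
  forall u : nat -> X,
    (forall eps, 0 < eps -> exists N, forall m n, (N <= m)%nat -> (N <= n)%nat ->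
        dX (u m) (u n) < eps) ->
    exists l, forall eps, 0 < eps -> exists N, forall n, (N <= n)%nat -> dX (u n) l < eps.

Definition continuous_m {X Y : Type} (dX : X -> X -> R) (dY : Y -> Y -> R)
  (f : X -> Y) : Prop :=
  forall x eps, 0 < eps -> exists delta, 0 < delta /\
    forall y, dX x y < delta -> dY (f x) (f y) < eps.

Definition unif_continuous_m {X Y : Type} (dX : X -> X -> R) (dY : Y -> Y -> R)
  (f : X -> Y) : Prop :=
  forall eps, 0 < eps -> exists delta, 0 < delta /\
    forall x y, dX x y < delta -> dY (f x) (f y) < eps.

Definition dense_image {X X' : Type} (dX' : X' -> X' -> R) (i : X -> X') : Prop :=
  forall z eps, 0 < eps -> exists x, dX' z (i x) < eps.

Definition is_hausdorff_completion {X X' : Type} (dX : X -> X -> R)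
  (dX' : X' -> X' -> R) (i : X -> X') : Prop :=
  is_metric dX' /\ is_complete dX' /\ continuous_m dX dX' i /\ dense_image dX' i /\
  forall (Y : Type) (dY : Y -> Y -> R), is_metric dY -> is_complete dY ->
    forall f : X -> Y, unif_continuous_m dX dY f ->
      exists g : X' -> Y, continuous_m dX' dY g /\ (forall x, g (i x) = f x) /\
        forall g' : X' -> Y, continuous_m dX' dY g' -> (forall x, g' (i x) = f x) ->
          forall z, g' z = g z.

(* Everything rests on a description of dL coming from the prime filter theorem:
   a lies in (d+1)L iff a <= b - a for some b in dL.  With it, an element x of hat L
   has codimension >= d exactly when its d-th component vanishes.  One direction pulls
   the prime filters of L avoiding dL back to hat L through the d-th component: the prime
   filters below such a pull-back are determined by their traces on L, so heights transfer
   back to L.  The other direction lifts the witnesses b coherently along the thread of x,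
   by induction on d.  Hence dist(x, y) <= 2^-d iff x and y agree in L/dL: L embeds
   isometrically and densely, a Cauchy sequence has eventually constant components, a
   uniformly continuous map extends by taking limits along the representatives of the
   components, and the balls of the codimension distance are the basic open sets of the
   projective topology. *)

From Stdlib Require Import Reals Lia Lra Classical ClassicalEpsilon FunctionalExtensionality PropExtensionality ProofIrrelevance.
From mathcomp Require classical_sets.

(** * Zorn's lemma for families of subsets *)

Definition incl {T} (A B : T -> Prop) : Prop := forall x, A x -> B x.

Definition chain {T} (F : (T -> Prop) -> Prop) : Prop :=
  forall X Y, F X -> F Y -> incl X Y \/ incl Y X.

Definition bigunion {T} (F : (T -> Prop) -> Prop) : T -> Prop :=
  fun x => exists X, F X /\ X x.

Definition bigintersection {T} (F : (T -> Prop) -> Prop) : T -> Prop :=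
  fun x => forall X, F X -> X x.

Lemma pred_ext {T} (A B : T -> Prop) : (forall x, A x <-> B x) -> A = B.
Proof.
  intro AB; apply functional_extensionality; intro x.
  apply propositional_extensionality, AB.
Qed.

Lemma zorn_above {T} (P : (T -> Prop) -> Prop) (A0 : T -> Prop) :
  P A0 ->
  (forall F, chain F -> (forall X, F X -> P X) -> (exists X, F X) -> P (bigunion F)) ->
  exists A, P A /\ incl A0 A /\ forall B, incl A B -> P B -> incl B A.
Proof.
  intros PA0 Hchain.
  (* Zorn on the sets [Y] with [P (Y \/ A0)], for which the empty chain is harmless. *)
  destruct (@classical_sets.Zorn_bigcup T (fun Y : T -> Prop => P (fun x => Y x \/ A0 x)))
    as [Y [PY Ymax]].
  - intros F FP Ftot.
    destruct (classic (exists X, F X)) as [[X0 FX0]|F0].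
    + set (G := fun Z => exists Y, F Y /\ Z = (fun x => Y x \/ A0 x)).
      replace (fun x => classical_sets.bigcup F (fun X => X) x \/ A0 x) with (bigunion G).
      { apply Hchain.
        - intros Z1 Z2 [Y1 [FY1 ->]] [Y2 [FY2 ->]].
          destruct (Ftot Y1 Y2 FY1 FY2) as [h|h]; [left|right];
            intros x [hx|hx]; auto.
        - intros Z [Y' [FY' ->]]; exact (FP Y' FY').
        - exists (fun x => X0 x \/ A0 x), X0; auto. }
      apply pred_ext; intro x; split.
      * intros [Z [[Y' [FY' ->]] [hx|hx]]]; [left; exists Y'|right]; auto.
      * intros [[Y' FY' hx]|hx].
        -- exists (fun x => Y' x \/ A0 x); split; [exists Y'|]; auto.
        -- exists (fun x => X0 x \/ A0 x); split; [exists X0|]; auto.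
    + replace (fun x => classical_sets.bigcup F (fun X => X) x \/ A0 x) with A0;
        [exact PA0|].
      apply pred_ext; intro x; split; [auto|].
      intros [[X FX _]|hx]; [exfalso; eauto|exact hx].
  - exists (fun x => Y x \/ A0 x); split; [exact PY|split; [intros x; now right|]].
    intros B AB PB x Bx; apply NNPP; intro nx.
    apply (Ymax B).
    + split; [intros y hy; apply AB; now left|].
      intro BY; apply nx; left; exact (BY x Bx).
    + replace (fun x => B x \/ A0 x) with B; [exact PB|].
      apply pred_ext; intro y; split; [now left|].
      intros [hy|hy]; [exact hy|apply AB; now right].
Qed.

Lemma zorn_below {T} (P : (T -> Prop) -> Prop) (A0 : T -> Prop) :
  P A0 ->
  (forall F, chain F -> (forall X, F X -> P X) -> (exists X, F X) -> P (bigintersection F)) ->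
  exists A, P A /\ incl A A0 /\ forall B, incl B A -> P B -> incl A B.
Proof.
  intros PA0 Hchain.
  set (compl := fun (X : T -> Prop) x => ~ X x).
  assert (complK : forall X, compl (compl X) = X).
  { intro X; apply pred_ext; intro x; unfold compl; split; [apply NNPP|tauto]. }
  destruct (zorn_above (fun X => P (compl X)) (compl A0)) as [A [PA [A0A Amax]]].
  - now rewrite complK.
  - intros F Fc FP [X FX].
    replace (compl (bigunion F)) with (bigintersection (fun Z => F (compl Z))).
    + apply Hchain.
      * intros Z1 Z2 h1 h2; destruct (Fc _ _ h1 h2) as [h|h]; [right|left];
          intros x hx; apply NNPP; intro nx; exact (h x nx hx).
      * intros Z FZ; rewrite <- (complK Z); exact (FP _ FZ).
      * exists (compl X); now rewrite complK.
    + apply pred_ext; intro x; unfold bigintersection, bigunion; split.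
      * intros h [Z [FZ Zx]]; apply (h (compl Z)); [now rewrite complK|tauto].
      * intros h Z FZ; apply NNPP; intro nx; apply h; exists (compl Z); auto.
  - exists (compl A); split; [exact PA|split].
    + intros x hx; apply NNPP; intro h; exact (hx (A0A x h)).
    + intros B BA PB x hx; apply NNPP; intro nx.
      apply hx, (Amax (compl B)); [|now rewrite complK|exact nx].
      intros y Ay By; exact (BA y By Ay).
Qed.

(** * Co-Heyting algebras, ideals and prime filters *)

Section CoHeyting.
Context {T : Type} {M : chops T} (HM : is_coHeyting M).
Local Notation J := (ch_join M).
Local Notation Me := (ch_meet M).
Local Notation D := (ch_diff M).
Local Notation Z := (ch_zero M).
Local Notation O := (ch_one M).
Local Notation le := (ch_le M).

Lemma ch_joinA a b c : J a (J b c) = J (J a b) c. Proof. apply HM. Qed.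
Lemma ch_joinC a b : J a b = J b a. Proof. apply HM. Qed.
Lemma ch_meetA a b c : Me a (Me b c) = Me (Me a b) c. Proof. apply HM. Qed.
Lemma ch_meetC a b : Me a b = Me b a. Proof. apply HM. Qed.
Lemma ch_joinKI a b : J a (Me a b) = a. Proof. apply HM. Qed.
Lemma ch_meetKU a b : Me a (J a b) = a. Proof. apply HM. Qed.
Lemma ch_meetUr a b c : Me a (J b c) = J (Me a b) (Me a c). Proof. apply HM. Qed.
Lemma ch_join0x a : J Z a = a. Proof. apply HM. Qed.
Lemma ch_meet1x a : Me O a = a. Proof. apply HM. Qed.
Lemma ch_diff_adj a b c : le a (J b c) <-> le (D a b) c. Proof. apply HM. Qed.

Lemma ch_joinx0 a : J a Z = a. Proof. rewrite ch_joinC; apply ch_join0x. Qed.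
Lemma ch_joinxx a : J a a = a. Proof. rewrite <- (ch_meetKU a a) at 2; apply ch_joinKI. Qed.
Lemma ch_meetxx a : Me a a = a. Proof. rewrite <- (ch_joinKI a a) at 2; apply ch_meetKU. Qed.

Lemma ch_le_refl a : le a a. Proof. apply ch_joinxx. Qed.
Lemma ch_le_trans a b c : le a b -> le b c -> le a c.
Proof. unfold ch_le; intros ab bc; rewrite <- bc, ch_joinA, ab; reflexivity. Qed.
Lemma ch_le_anti a b : le a b -> le b a -> a = b.
Proof. unfold ch_le; intros ab ba; rewrite <- ab, ch_joinC; symmetry; exact ba. Qed.
Lemma ch_le_joinl a b : le a (J a b). Proof. unfold ch_le; rewrite ch_joinA, ch_joinxx; reflexivity. Qed.
Lemma ch_le_joinr a b : le b (J a b). Proof. rewrite ch_joinC; apply ch_le_joinl. Qed.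
Lemma ch_join_lub a b c : le a c -> le b c -> le (J a b) c.
Proof. unfold ch_le; intros ac bc; rewrite <- ch_joinA, bc, ac; reflexivity. Qed.
Lemma ch_le_meetE a b : le a b <-> Me a b = a.
Proof.
  unfold ch_le; split; intro h.
  - rewrite <- h; apply ch_meetKU.
  - rewrite <- h, ch_joinC, ch_meetC; apply ch_joinKI.
Qed.
Lemma ch_le_meetl a b : le (Me a b) a.
Proof. apply ch_le_meetE; rewrite ch_meetC, ch_meetA, ch_meetxx; reflexivity. Qed.
Lemma ch_le_meetr a b : le (Me a b) b. Proof. rewrite ch_meetC; apply ch_le_meetl. Qed.
Lemma ch_meet_glb a b c : le c a -> le c b -> le c (Me a b).
Proof. rewrite !ch_le_meetE; intros ca cb; rewrite ch_meetA, ca, cb; reflexivity. Qed.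
Lemma ch_le0x a : le Z a. Proof. apply ch_join0x. Qed.
Lemma ch_lex1 a : le a O. Proof. apply ch_le_meetE; rewrite ch_meetC; apply ch_meet1x. Qed.
Lemma ch_join_mono a b c d : le a b -> le c d -> le (J a c) (J b d).
Proof.
  intros ab cd; apply ch_join_lub.
  - apply (ch_le_trans _ _ _ ab), ch_le_joinl.
  - apply (ch_le_trans _ _ _ cd), ch_le_joinr.
Qed.
Lemma ch_meet_mono a b c d : le a b -> le c d -> le (Me a c) (Me b d).
Proof.
  intros ab cd; apply ch_meet_glb.
  - exact (ch_le_trans _ _ _ (ch_le_meetl a c) ab).
  - exact (ch_le_trans _ _ _ (ch_le_meetr a c) cd).
Qed.

Lemma ch_diffLR a b c : le a (J b c) -> le (D a b) c. Proof. apply ch_diff_adj. Qed.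
Lemma ch_diffRL a b c : le (D a b) c -> le a (J b c). Proof. apply ch_diff_adj. Qed.

Lemma ch_le_join_diff a b : le a (J b (D a b)). Proof. apply ch_diffRL, ch_le_refl. Qed.
Lemma ch_le_diff a b : le (D a b) a. Proof. apply ch_diffLR, ch_le_joinr. Qed.
Lemma ch_diff_monol a a' b : le a a' -> le (D a b) (D a' b).
Proof. intro aa'; apply ch_diffLR, (ch_le_trans _ _ _ aa'), ch_le_join_diff. Qed.
Lemma ch_diff_monor a b b' : le b b' -> le (D a b') (D a b).
Proof.
  intro bb'; apply ch_diffLR, (ch_le_trans _ _ _ (ch_le_join_diff a b)).
  apply ch_join_mono; [exact bb'|apply ch_le_refl].
Qed.
Lemma ch_diff_eq0 a b : D a b = Z <-> le a b.
Proof.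
  rewrite <- (ch_joinx0 b) at 2; rewrite ch_diff_adj; split.
  - intros ->; apply ch_le_refl.
  - intro h; apply ch_le_anti; [exact h|apply ch_le0x].
Qed.
Lemma ch_diffxx a : D a a = Z. Proof. apply ch_diff_eq0, ch_le_refl. Qed.
Lemma ch_diff0x a : D Z a = Z. Proof. apply ch_diff_eq0, ch_le0x. Qed.

Lemma ch_le_ext a b : (forall x, le a x <-> le b x) -> a = b.
Proof. intro h; apply ch_le_anti; apply h, ch_le_refl. Qed.

Lemma ch_diffx0 a : D a Z = a.
Proof. apply ch_le_ext; intro x; rewrite <- ch_diff_adj, ch_join0x; reflexivity. Qed.
Lemma ch_diffUr a b c : D a (J b c) = D (D a b) c.
Proof. apply ch_le_ext; intro x; rewrite <- !ch_diff_adj, ch_joinA; reflexivity. Qed.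
Lemma ch_diffUl a a' b : D (J a a') b = J (D a b) (D a' b).
Proof.
  apply ch_le_anti.
  - apply ch_diffLR, ch_join_lub.
    + apply (ch_le_trans _ _ _ (ch_le_join_diff a b)).
      apply ch_join_mono; [apply ch_le_refl|apply ch_le_joinl].
    + apply (ch_le_trans _ _ _ (ch_le_join_diff a' b)).
      apply ch_join_mono; [apply ch_le_refl|apply ch_le_joinr].
  - apply ch_join_lub; apply ch_diff_monol; [apply ch_le_joinl|apply ch_le_joinr].
Qed.

Lemma ch_diff_triangle a b c : le (D a c) (J (D a b) (D b c)).
Proof.
  apply ch_diffLR, (ch_le_trans _ _ _ (ch_le_join_diff a b)), ch_join_lub.
  - apply (ch_le_trans _ _ _ (ch_le_join_diff b c)).
    apply ch_join_mono; [apply ch_le_refl|apply ch_le_joinr].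
  - apply (ch_le_trans _ _ _ (ch_le_joinl (D a b) (D b c))), ch_le_joinr.
Qed.

Lemma ch_diff_join2r a b c : le (D (J a c) (J b c)) (D a b).
Proof.
  apply ch_diffLR, ch_join_lub.
  - apply (ch_le_trans _ _ _ (ch_le_join_diff a b)).
    apply ch_join_mono; [apply ch_le_joinl|apply ch_le_refl].
  - apply (ch_le_trans _ _ _ (ch_le_joinr b c)), ch_le_joinl.
Qed.
Lemma ch_diff_meet2r a b c : le (D (Me a c) (Me b c)) (D a b).
Proof.
  apply ch_diffLR.
  apply (ch_le_trans _ _ _ (ch_meet_mono _ _ c c (ch_le_join_diff a b) (ch_le_refl c))).
  rewrite ch_meetC, ch_meetUr; apply ch_join_mono.
  - rewrite ch_meetC; apply ch_le_refl.
  - apply ch_le_meetr.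
Qed.
Lemma ch_diff_diff2r a b c : le (D (D a c) (D b c)) (D a b).
Proof.
  rewrite <- ch_diffUr; apply ch_diffLR, (ch_le_trans _ _ _ (ch_le_join_diff a b)).
  apply ch_join_mono; [apply ch_le_join_diff|apply ch_le_refl].
Qed.
Lemma ch_diff_diff2l a b c : le (D (D c a) (D c b)) (D b a).
Proof.
  rewrite <- ch_diffUr; apply ch_diffLR, (ch_le_trans _ _ _ (ch_le_join_diff c b)), ch_join_lub.
  - apply (ch_le_trans _ _ _ (ch_le_join_diff b a)).
    apply ch_join_mono; [apply ch_le_joinl|apply ch_le_refl].
  - apply (ch_le_trans _ _ _ (ch_le_joinr a (D c b))), ch_le_joinl.
Qed.

Lemma ch_le_diff_self_mono a b b' : le a (D b a) -> le b b' -> le a (D b' a).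
Proof. intros h bb'; exact (ch_le_trans _ _ _ h (ch_diff_monol _ _ _ bb')). Qed.

Lemma ch_le_diff_self_join a a' b :
  le a (D b a) -> le a' (D b a') -> le (J a a') (D b (J a a')).
Proof.
  (* If [x <= b - x] then [b <= x \/ (b - x) <= b - x], so [b - x = b]. *)
  assert (diff_fix : forall x, le x (D b x) -> D b x = b).
  { intros x hx; apply ch_le_anti; [apply ch_le_diff|].
    apply (ch_le_trans _ _ _ (ch_le_join_diff b x)), ch_join_lub; [exact hx|apply ch_le_refl]. }
  intros ha ha'; rewrite ch_diffUr, !diff_fix by assumption.
  apply ch_join_lub.
  - exact (ch_le_trans _ _ _ ha (ch_le_diff b a)).
  - exact (ch_le_trans _ _ _ ha' (ch_le_diff b a')).
Qed.

Definition is_ideal (I : T -> Prop) : Prop :=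
  I Z /\ (forall a b, le a b -> I b -> I a) /\ (forall a b, I a -> I b -> I (J a b)).

Definition is_filter (F : T -> Prop) : Prop :=
  (forall a b, F a -> le a b -> F b) /\ (forall a b, F a -> F b -> F (Me a b)).

Section Ideal.
Variable I : T -> Prop.
Hypothesis HI : is_ideal I.

Lemma ideal0 : I Z. Proof. apply HI. Qed.
Lemma ideal_le a b : le a b -> I b -> I a. Proof. apply HI. Qed.
Lemma ideal_join a b : I a -> I b -> I (J a b). Proof. apply HI. Qed.
Lemma ideal_joinE a b : I (J a b) <-> I a /\ I b.
Proof.
  split.
  - intro h; split; [exact (ideal_le _ _ (ch_le_joinl a b) h)|exact (ideal_le _ _ (ch_le_joinr a b) h)].
  - intros [ha hb]; apply ideal_join; assumption.
Qed.

Local Notation congr a b := (I (sym_diff M a b)).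

Lemma congrE a b : congr a b <-> I (D a b) /\ I (D b a). Proof. apply ideal_joinE. Qed.

Lemma congr_refl a : congr a a.
Proof. unfold sym_diff; rewrite ch_diffxx, ch_joinxx; apply ideal0. Qed.
Lemma congr_sym a b : congr a b -> congr b a.
Proof. unfold sym_diff; rewrite ch_joinC; auto. Qed.
Lemma congr_trans a b c : congr a b -> congr b c -> congr a c.
Proof.
  intros [ab ba]%congrE [bc cb]%congrE; apply congrE; split.
  - apply (ideal_le _ _ (ch_diff_triangle a b c)), ideal_join; assumption.
  - apply (ideal_le _ _ (ch_diff_triangle c b a)), ideal_join; assumption.
Qed.

Lemma congr_join a b c d : congr a b -> congr c d -> congr (J a c) (J b d).
Proof.
  intros [ab ba]%congrE [cd dc]%congrE.
  apply (congr_trans _ (J b c)); apply congrE; split.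
  - exact (ideal_le _ _ (ch_diff_join2r a b c) ab).
  - exact (ideal_le _ _ (ch_diff_join2r b a c) ba).
  - rewrite !(ch_joinC b); exact (ideal_le _ _ (ch_diff_join2r c d b) cd).
  - rewrite !(ch_joinC b); exact (ideal_le _ _ (ch_diff_join2r d c b) dc).
Qed.
Lemma congr_meet a b c d : congr a b -> congr c d -> congr (Me a c) (Me b d).
Proof.
  intros [ab ba]%congrE [cd dc]%congrE.
  apply (congr_trans _ (Me b c)); apply congrE; split.
  - exact (ideal_le _ _ (ch_diff_meet2r a b c) ab).
  - exact (ideal_le _ _ (ch_diff_meet2r b a c) ba).
  - rewrite !(ch_meetC b); exact (ideal_le _ _ (ch_diff_meet2r c d b) cd).
  - rewrite !(ch_meetC b); exact (ideal_le _ _ (ch_diff_meet2r d c b) dc).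
Qed.
Lemma congr_diff a b c d : congr a b -> congr c d -> congr (D a c) (D b d).
Proof.
  intros [ab ba]%congrE [cd dc]%congrE.
  apply (congr_trans _ (D b c)); apply congrE; split.
  - exact (ideal_le _ _ (ch_diff_diff2r a b c) ab).
  - exact (ideal_le _ _ (ch_diff_diff2r b a c) ba).
  - exact (ideal_le _ _ (ch_diff_diff2l c d b) dc).
  - exact (ideal_le _ _ (ch_diff_diff2l d c b) cd).
Qed.

Lemma congr0 a : congr a Z <-> I a.
Proof. unfold sym_diff; rewrite ch_diffx0, ch_diff0x, ch_joinx0; reflexivity. Qed.

End Ideal.

Local Notation prime := (is_prime_filter M).

Lemma prime_filter1 p : prime p -> p O. Proof. intro h; apply h. Qed.
Lemma prime_filter_not0 p : prime p -> ~ p Z. Proof. intro h; apply h. Qed.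
Lemma prime_filter_up p a b : prime p -> p a -> le a b -> p b. Proof. intro h; apply h. Qed.
Lemma prime_filter_meet p a b : prime p -> p a -> p b -> p (Me a b). Proof. intro h; apply h. Qed.
Lemma prime_filter_join p a b : prime p -> p (J a b) -> p a \/ p b. Proof. intro h; apply h. Qed.

Lemma prime_filter_meet_inv p a b : prime p -> p (Me a b) -> p a /\ p b.
Proof. intros hp h; split; eapply prime_filter_up; eauto using ch_le_meetl, ch_le_meetr. Qed.

Lemma prime_filter_join_diff p a b : prime p -> p a -> p b \/ p (D a b).
Proof. intros hp pa; exact (prime_filter_join _ _ _ hp (prime_filter_up _ _ _ hp pa (ch_le_join_diff a b))). Qed.

Lemma prime_filter_iff p a b : prime p -> ~ p (D a b) -> ~ p (D b a) -> (p a <-> p b).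
Proof.
  intros hp nab nba; split; intro h.
  - destruct (prime_filter_join_diff p a b hp h); tauto.
  - destruct (prime_filter_join_diff p b a hp h); tauto.
Qed.

Lemma prime_filter_congr (I : T -> Prop) p a b : is_ideal I -> prime p ->
  (forall e, p e -> ~ I e) -> I (sym_diff M a b) -> (p a <-> p b).
Proof.
  intros HI hp pI [ab ba]%(congrE _ HI).
  apply prime_filter_iff; [exact hp|intro h; exact (pI _ h ab)|intro h; exact (pI _ h ba)].
Qed.

Lemma filter_bigunion F : chain F -> (forall X, F X -> is_filter X) -> is_filter (bigunion F).
Proof.
  intros Fc Ff; split.
  - intros a b [X [FX Xa]] ab; exists X; split; [exact FX|exact (proj1 (Ff X FX) a b Xa ab)].
  - intros a b [X [FX Xa]] [Y [FY Yb]].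
    destruct (Fc X Y FX FY) as [XY|YX].
    + exists Y; split; [exact FY|apply (Ff Y FY); auto].
    + exists X; split; [exact FX|apply (Ff X FX); auto].
Qed.

Lemma filter_adjoin A z : is_filter A -> is_filter (fun w => exists g, A g /\ le (Me g z) w).
Proof.
  intros [Aup Ameet]; split.
  - intros a b [g [Ag ga]] ab; exists g; split; [exact Ag|exact (ch_le_trans _ _ _ ga ab)].
  - intros a b [g [Ag ga]] [g' [Ag' gb]]; exists (Me g g'); split; [auto|].
    apply ch_meet_glb.
    + refine (ch_le_trans _ _ _ _ ga); apply ch_meet_mono; [apply ch_le_meetl|apply ch_le_refl].
    + refine (ch_le_trans _ _ _ _ gb); apply ch_meet_mono; [apply ch_le_meetr|apply ch_le_refl].
Qed.

Lemma maximal_filter_prime (I A : T -> Prop) v : is_ideal I -> is_filter A -> A v ->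
  (forall x, A x -> ~ I x) ->
  (forall B, incl A B -> is_filter B -> (forall x, B x -> ~ I x) -> incl B A) ->
  prime A.
Proof.
  intros HI [Aup Ameet] Av AI Amax.
  (* Otherwise the filter generated by [A] and [z] would be a larger filter avoiding [I]. *)
  assert (outside : forall z, ~ A z -> exists g, A g /\ I (Me g z)).
  { intros z nz; apply NNPP; intro none; apply nz.
    apply (Amax (fun w => exists g, A g /\ le (Me g z) w)).
    - intros a Aa; exists a; split; [exact Aa|apply ch_le_meetl].
    - apply filter_adjoin; split; assumption.
    - intros w [g [Ag gw]] Iw; apply none; exists g; split; [exact Ag|exact (ideal_le _ HI _ _ gw Iw)].
    - exists v; split; [exact Av|apply ch_le_meetr]. }
  repeat split.
  - exact (Aup _ _ Av (ch_lex1 v)).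
  - intro A0; exact (AI _ A0 (ideal0 _ HI)).
  - exact Aup.
  - exact Ameet.
  - intros x y Axy; apply NNPP; intros [nx ny]%not_or_and.
    destruct (outside x nx) as [g [Ag Igx]], (outside y ny) as [g' [Ag' Igy]].
    apply (AI (Me (Me g g') (J x y))); [apply Ameet; auto|].
    apply (ideal_le _ HI _ (J (Me g x) (Me g' y))); [|apply ideal_join; assumption].
    rewrite ch_meetUr; apply ch_join_mono; apply ch_meet_mono;
      (apply ch_le_meetl || apply ch_le_meetr || apply ch_le_refl).
Qed.

Theorem prime_filter_theorem (I : T -> Prop) v : is_ideal I -> ~ I v ->
  exists q, prime q /\ q v /\ forall x, q x -> ~ I x.
Proof.
  intros HI Iv.
  destruct (zorn_above (fun X => is_filter X /\ forall x, X x -> ~ I x) (fun x => le v x))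
    as [A [[Af AI] [vA Amax]]].
  - split; [split|].
    + intros a b va ab; exact (ch_le_trans _ _ _ va ab).
    + intros a b; apply ch_meet_glb.
    + intros x vx Ix; exact (Iv (ideal_le _ HI _ _ vx Ix)).
  - intros F Fc FP _; split.
    + apply filter_bigunion; [exact Fc|intros X FX; apply (FP X FX)].
    + intros x [X [FX Xx]]; exact (proj2 (FP X FX) x Xx).
  - exists A; split; [|split; [exact (vA v (ch_le_refl v))|exact AI]].
    apply (maximal_filter_prime I A v HI Af (vA v (ch_le_refl v)) AI).
    intros B AB Bf BI; apply Amax; auto.
Qed.

Lemma height_ge_pred p n : height_ge M p (S n) -> height_ge M p n.
Proof.
  revert p; induction n as [|n IH]; intros p [q [hq [qp hqn]]]; [exact I|].
  exists q; split; [exact hq|split; [exact qp|exact (IH q hqn)]].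
Qed.

Lemma height_ge_le p k n : (k <= n)%nat -> height_ge M p n -> height_ge M p k.
Proof. intro kn; induction kn; [auto|intro h; apply IHkn, height_ge_pred, h]. Qed.

Lemma in_dL_le k n a : (k <= n)%nat -> in_dL M n a -> in_dL M k a.
Proof. intros kn h p hp pa; exact (height_ge_le p k n kn (h p hp pa)). Qed.

Lemma in_dL0 a : in_dL M 0 a. Proof. intros p _ _; exact I. Qed.

Lemma in_dL_ideal d : is_ideal (in_dL M d).
Proof.
  repeat split.
  - intros p hp p0; destruct (prime_filter_not0 p hp p0).
  - intros a b ab hb p hp pa; exact (hb p hp (prime_filter_up p a b hp pa ab)).
  - intros a b ha hb p hp pab; destruct (prime_filter_join p a b hp pab); auto.
Qed.

Lemma prime_filter_below_diff s v c : prime s -> s (D v c) ->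
  exists q, prime q /\ incl q s /\ q v /\ ~ q c.
Proof.
  intros hs svc.
  set (I := fun x => exists e, ~ s e /\ le x (J e c)).
  assert (HI : is_ideal I).
  { repeat split.
    - exists Z; split; [apply prime_filter_not0, hs|apply ch_le0x].
    - intros a b ab [e [se be]]; exists e; split; [exact se|exact (ch_le_trans _ _ _ ab be)].
    - intros a b [e [se ae]] [e' [se' be']]; exists (J e e'); split.
      + intro h; destruct (prime_filter_join s e e' hs h); auto.
      + apply ch_join_lub.
        * apply (ch_le_trans _ _ _ ae), ch_join_mono; [apply ch_le_joinl|apply ch_le_refl].
        * apply (ch_le_trans _ _ _ be'), ch_join_mono; [apply ch_le_joinr|apply ch_le_refl]. }
  destruct (prime_filter_theorem I v HI) as [q [hq [qv qI]]].
  - intros [e [se ve]]; apply se, (prime_filter_up s _ _ hs svc).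
    apply ch_diffLR; rewrite ch_joinC; exact ve.
  - exists q; split; [exact hq|split; [|split; [exact qv|]]].
    + intros x qx; apply NNPP; intro sx; apply (qI x qx).
      exists x; split; [exact sx|apply ch_le_joinl].
    + intro qc; apply (qI c qc); exists Z; split.
      * apply prime_filter_not0, hs.
      * rewrite ch_join0x; apply ch_le_refl.
Qed.

Lemma height_ge_meets_in_dL d s : prime s -> height_ge M s d -> exists a, s a /\ in_dL M d a.
Proof.
  revert s; induction d as [|d IH]; intros s hs hsd.
  - exists O; split; [apply prime_filter1, hs|apply in_dL0].
  - destruct hsd as [q [hq [[qs [c [sc qc]]] hqd]]].
    destruct (IH q hq hqd) as [b [qb db]].
    exists (Me c (D b c)); split.
    + apply prime_filter_meet; [exact hs|exact sc|apply qs].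
      destruct (prime_filter_join_diff q b c hq qb); tauto.
    + intros t ht [tc tbc]%(prime_filter_meet_inv t); [|exact ht].
      destruct (prime_filter_below_diff t b c ht tbc) as [r [hr [rt [rb rc]]]].
      exists r; split; [exact hr|split; [split; [exact rt|exists c; auto]|exact (db r hr rb)]].
Qed.

Lemma in_dL_succ_of_le_diff d a b : in_dL M d b -> le a (D b a) -> in_dL M (S d) a.
Proof.
  intros db ab t ht ta.
  destruct (prime_filter_below_diff t b a ht (prime_filter_up t _ _ ht ta ab))
    as [r [hr [rt [rb ra]]]].
  exists r; split; [exact hr|split; [split; [exact rt|exists a; auto]|exact (db r hr rb)]].
Qed.

Lemma prime_filter_bigintersection F : chain F -> (forall X, F X -> prime X) ->
  (exists X, F X) -> prime (bigintersection F).
Proof.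
  intros Fc Fp [X0 FX0]; repeat split.
  - intros X FX; apply prime_filter1, Fp, FX.
  - intro h; exact (prime_filter_not0 X0 (Fp X0 FX0) (h X0 FX0)).
  - intros a b ha ab X FX; exact (prime_filter_up X a b (Fp X FX) (ha X FX) ab).
  - intros a b ha hb X FX; exact (prime_filter_meet X a b (Fp X FX) (ha X FX) (hb X FX)).
  - intros a b hab; apply NNPP; intros [na nb]%not_or_and.
    apply not_all_ex_not in na as [X na]; apply imply_to_and in na as [FX na].
    apply not_all_ex_not in nb as [Y nb]; apply imply_to_and in nb as [FY nb].
    destruct (Fc X Y FX FY) as [XY|YX].
    + destruct (prime_filter_join X a b (Fp X FX) (hab X FX)) as [h|h]; auto.
    + destruct (prime_filter_join Y a b (Fp Y FY) (hab Y FY)) as [h|h]; auto.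
Qed.

Lemma minimal_prime_filter s a : prime s -> s a ->
  exists q, prime q /\ q a /\ incl q s /\
    forall r, prime r -> r a -> incl r q -> incl q r.
Proof.
  intros hs sa.
  destruct (zorn_below (fun X => prime X /\ X a) s) as [q [[hq qa] [qs qmin]]].
  - split; assumption.
  - intros F Fc FP Fne; split.
    + apply prime_filter_bigintersection; [exact Fc|intros X FX; apply FP, FX|exact Fne].
    + intros X FX; apply FP, FX.
  - exists q; split; [exact hq|split; [exact qa|split; [exact qs|]]].
    intros r hr ra rq; apply qmin; auto.
Qed.

Lemma in_dL_succ_le_diff d a : in_dL M (S d) a -> exists b, in_dL M d b /\ le a (D b a).
Proof.
  intro ha.
  set (I := fun x => exists b, in_dL M d b /\ le x (D b a)).
  assert (HI : is_ideal I).
  { repeat split.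
    - exists Z; split; [apply ideal0, in_dL_ideal|apply ch_le0x].
    - intros x y xy [b [db yb]]; exists b; split; [exact db|exact (ch_le_trans _ _ _ xy yb)].
    - intros x y [b [db xb]] [b' [db' yb']]; exists (J b b'); split.
      + apply ideal_join; [apply in_dL_ideal|exact db|exact db'].
      + rewrite ch_diffUl; apply ch_join_mono; assumption. }
  apply NNPP; intro Ia.
  destruct (prime_filter_theorem I a HI Ia) as [s [hs [sa sI]]].
  destruct (minimal_prime_filter s a hs sa) as [q [hq [qa [qs qmin]]]].
  destruct (ha q hq qa) as [r [hr [[rq [x [qx rx]]] hrd]]].
  (* [r] lies strictly below the minimal [q], so it misses [a]; a witness [b] of
     height [d] in [r] then puts [b - a] into [r], hence into [s]. *)
  assert (ra : ~ r a) by (intro h; exact (rx (qmin r hr h rq x qx))).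
  destruct (height_ge_meets_in_dL d r hr hrd) as [b [rb db]].
  destruct (prime_filter_join_diff r b a hr rb) as [h|h]; [exact (ra h)|].
  apply (sI (D b a)); [exact (qs _ (rq _ h))|exists b; split; [exact db|apply ch_le_refl]].
Qed.

End CoHeyting.

(** * The quotients L/dL and their inverse limit *)

Section Quotient.
Context {T : Type} {L : chops T} (HL : is_coHeyting L).
Local Notation J := (ch_join L).
Local Notation Me := (ch_meet L).
Local Notation D := (ch_diff L).
Local Notation Z := (ch_zero L).
Local Notation O := (ch_one L).

Lemma cls_congr d : forall a b c e, cls L d a b -> cls L d c e ->
  cls L d (J a c) (J b e) /\ cls L d (Me a c) (Me b e) /\ cls L d (D a c) (D b e).
Proof.
  unfold cls; intros a b c e ab ce; repeat split;
    [apply (congr_join HL)|apply (congr_meet HL)|apply (congr_diff HL)];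
    auto; apply in_dL_ideal.
Qed.

Lemma cls_refl d a : cls L d a a.
Proof. apply (congr_refl HL _ (in_dL_ideal d)). Qed.
Lemma cls_sym d a b : cls L d a b -> cls L d b a.
Proof. apply (congr_sym HL). Qed.
Lemma cls_trans d a b c : cls L d a b -> cls L d b c -> cls L d a c.
Proof. apply (congr_trans HL _ (in_dL_ideal d)). Qed.

Lemma quot_eq d (X Y : quot L d) : proj1_sig X = proj1_sig Y -> X = Y.
Proof.
  destruct X as [X hX], Y as [Y hY]; cbn; intros <-.
  f_equal; apply proof_irrelevance.
Qed.

Lemma pi_eq d a b : pi L d a = pi L d b <-> cls L d a b.
Proof.
  split; intro h.
  - apply (f_equal (@proj1_sig _ _)) in h; cbn in h; rewrite h.
    apply cls_refl.
  - apply quot_eq, pred_ext; intro x; cbn; unfold cls; split; intro hx.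
    + exact (cls_trans d _ _ _ (cls_sym d _ _ h) hx).
    + exact (cls_trans d _ _ _ h hx).
Qed.

Lemma pi_repr d (X : quot L d) : pi L d (repr X) = X.
Proof.
  apply quot_eq; unfold repr.
  destruct (constructive_indefinite_description _ _) as [a ha]; cbn.
  symmetry; exact ha.
Qed.

Lemma pi_surj d (X : quot L d) : exists a, X = pi L d a.
Proof. exists (repr X); symmetry; apply pi_repr. Qed.

Lemma repr_pi d a : cls L d (repr (pi L d a)) a.
Proof. apply pi_eq, pi_repr. Qed.

Lemma pi_eq0 d a : pi L d a = pi L d Z <-> in_dL L d a.
Proof. rewrite pi_eq; apply (congr0 HL). Qed.

Lemma qjoin_pi d a b : qjoin L d (pi L d a) (pi L d b) = pi L d (J a b).
Proof. apply pi_eq, cls_congr; apply repr_pi. Qed.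
Lemma qmeet_pi d a b : qmeet L d (pi L d a) (pi L d b) = pi L d (Me a b).
Proof. apply pi_eq, cls_congr; apply repr_pi. Qed.
Lemma qdiff_pi d a b : qdiff L d (pi L d a) (pi L d b) = pi L d (D a b).
Proof. apply pi_eq, cls_congr; apply repr_pi. Qed.

Lemma pi_succ_pi d a : pi_succ L d (pi L (S d) a) = pi L d a.
Proof. apply pi_eq, (in_dL_le d (S d)), repr_pi; lia. Qed.

Definition quot_chops d : chops (quot L d) :=
  CHOps _ (pi L d Z) (pi L d O) (qjoin L d) (qmeet L d) (qdiff L d).

Lemma quot_le_pi d a b : ch_le (quot_chops d) (pi L d a) (pi L d b) <-> in_dL L d (D a b).
Proof.
  unfold ch_le; cbn; rewrite qjoin_pi, pi_eq; unfold cls, sym_diff.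
  rewrite (ch_diffUl HL), (ch_diffxx HL), (ch_joinx0 HL).
  rewrite (proj2 (ch_diff_eq0 HL b (J a b)) (ch_le_joinr HL a b)), (ch_joinx0 HL).
  reflexivity.
Qed.

Lemma quot_coHeyting d : is_coHeyting (quot_chops d).
Proof.
  assert (adj : forall X Y W : quot L d,
    ch_le (quot_chops d) X (qjoin L d Y W) <-> ch_le (quot_chops d) (qdiff L d X Y) W).
  { intros X Y W.
    destruct (pi_surj d X) as [a ->], (pi_surj d Y) as [b ->], (pi_surj d W) as [c ->].
    rewrite qjoin_pi, qdiff_pi, !quot_le_pi, (ch_diffUr HL); reflexivity. }
  repeat apply conj; [..|exact adj]; intros;
    repeat match goal with X : quot L d |- _ => destruct (pi_surj d X) as [? ->] end;
    cbn [ch_join ch_meet ch_diff ch_zero ch_one quot_chops];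
    repeat rewrite ?qjoin_pi, ?qmeet_pi; f_equal; apply HL.
Qed.

End Quotient.
Arguments quot_chops {T} L d.

Section InverseLimit.
Context {T : Type} {L : chops T} (HL : is_coHeyting L).
Local Notation J := (ch_join L).
Local Notation Me := (ch_meet L).
Local Notation Z := (ch_zero L).
Local Notation O := (ch_one L).

Lemma hat_ext (x y : hat L) : (forall d, proj1_sig x d = proj1_sig y d) -> x = y.
Proof.
  destruct x as [x hx], y as [y hy]; cbn; intro xy.
  assert (x = y) as <- by (apply functional_extensionality_dep; exact xy).
  f_equal; apply proof_irrelevance.
Qed.

Definition hat_repr (x : hat L) (n : nat) : T := repr (proj1_sig x n).

Lemma hat_repr_pi x k n : (k <= n)%nat -> pi L k (hat_repr x n) = proj1_sig x k.
Proof.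
  intro kn; induction kn as [|n kn IH]; [apply pi_repr|].
  rewrite <- IH; apply (pi_eq HL), (in_dL_le k n _ kn), (pi_eq HL).
  unfold hat_repr; rewrite pi_repr, <- (proj2_sig x n); reflexivity.
Qed.

Lemma pi_succ_lift (f : T -> T -> T)
  (Hf : forall d a b c e, cls L d a b -> cls L d c e -> cls L d (f a c) (f b e))
  d (X Y : quot L (S d)) :
  pi_succ L d (pi L (S d) (f (repr X) (repr Y)))
  = pi L d (f (repr (pi_succ L d X)) (repr (pi_succ L d Y))).
Proof.
  destruct (pi_surj (S d) X) as [a ->], (pi_surj (S d) Y) as [b ->].
  rewrite !(pi_succ_pi HL); apply (pi_eq HL), (cls_trans HL _ _ (f a b)).
  - apply (in_dL_le d (S d)); [lia|apply Hf; apply (repr_pi HL)].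
  - apply (cls_sym HL), Hf; apply (repr_pi HL).
Qed.

Lemma pi_succ_qjoin d X Y : pi_succ L d (qjoin L (S d) X Y) = qjoin L d (pi_succ L d X) (pi_succ L d Y).
Proof. apply pi_succ_lift; intros; apply (cls_congr HL); assumption. Qed.
Lemma pi_succ_qmeet d X Y : pi_succ L d (qmeet L (S d) X Y) = qmeet L d (pi_succ L d X) (pi_succ L d Y).
Proof. apply pi_succ_lift; intros; apply (cls_congr HL); assumption. Qed.
Lemma pi_succ_qdiff d X Y : pi_succ L d (qdiff L (S d) X Y) = qdiff L d (pi_succ L d X) (pi_succ L d Y).
Proof. apply pi_succ_lift; intros; apply (cls_congr HL); assumption. Qed.

Definition mk_hat (x : forall d, quot L d) (hx : forall d, pi_succ L d (x (S d)) = x d) : hat L :=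
  exist (fun z => forall d, pi_succ L d (z (S d)) = z d) x hx.

Definition hat_binop (op : forall d, quot L d -> quot L d -> quot L d)
  (Hop : forall d X Y, pi_succ L d (op (S d) X Y) = op d (pi_succ L d X) (pi_succ L d Y))
  (x y : hat L) : hat L :=
  mk_hat (fun d => op d (proj1_sig x d) (proj1_sig y d))
    (fun d => eq_trans (Hop d _ _) (f_equal2 (op d) (proj2_sig x d) (proj2_sig y d))).

Definition hconst (a : T) : hat L := mk_hat (fun d => pi L d a) (fun d => pi_succ_pi HL d a).

Definition hat_chops : chops (hat L) :=
  CHOps _ (hconst Z) (hconst O) (hat_binop (qjoin L) pi_succ_qjoin)
    (hat_binop (qmeet L) pi_succ_qmeet) (hat_binop (qdiff L) pi_succ_qdiff).

Lemma hat_zeroE d : proj1_sig (ch_zero hat_chops) d = pi L d Z. Proof. reflexivity. Qed.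
Lemma hat_oneE d : proj1_sig (ch_one hat_chops) d = pi L d O. Proof. reflexivity. Qed.
Lemma hat_joinE x y d :
  proj1_sig (ch_join hat_chops x y) d = qjoin L d (proj1_sig x d) (proj1_sig y d).
Proof. reflexivity. Qed.
Lemma hat_meetE x y d :
  proj1_sig (ch_meet hat_chops x y) d = qmeet L d (proj1_sig x d) (proj1_sig y d).
Proof. reflexivity. Qed.
Lemma hat_diffE x y d :
  proj1_sig (ch_diff hat_chops x y) d = qdiff L d (proj1_sig x d) (proj1_sig y d).
Proof. reflexivity. Qed.
Lemma hconstE a d : proj1_sig (hconst a) d = pi L d a. Proof. reflexivity. Qed.

Lemma hat_le_iff x y :
  ch_le hat_chops x y <-> forall d, ch_le (quot_chops L d) (proj1_sig x d) (proj1_sig y d).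
Proof.
  split.
  - intros xy d; exact (f_equal (fun z : hat L => proj1_sig z d) xy).
  - intro xy; apply hat_ext, xy.
Qed.

Lemma hat_coHeyting : is_coHeyting hat_chops.
Proof.
  pose proof (quot_coHeyting HL) as HQ.
  repeat apply conj; [intros; apply hat_ext; intro d..|].
  - apply (ch_joinA (HQ d)).
  - apply (ch_joinC (HQ d)).
  - apply (ch_meetA (HQ d)).
  - apply (ch_meetC (HQ d)).
  - apply (ch_joinKI (HQ d)).
  - apply (ch_meetKU (HQ d)).
  - apply (ch_meetUr (HQ d)).
  - apply (ch_join0x (HQ d)).
  - apply (ch_meet1x (HQ d)).
  - intros x y z; rewrite !hat_le_iff; split; intros h d; apply (ch_diff_adj (HQ d)), h.
Qed.

Lemma hconst_join a b : ch_join hat_chops (hconst a) (hconst b) = hconst (J a b).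
Proof. apply hat_ext; intro d; apply (qjoin_pi HL). Qed.
Lemma hconst_meet a b : ch_meet hat_chops (hconst a) (hconst b) = hconst (Me a b).
Proof. apply hat_ext; intro d; apply (qmeet_pi HL). Qed.

End InverseLimit.

(** * Codimension in the inverse limit *)

Lemma prime_filter_comap {T U} (L : chops T) (M : chops U) (f : T -> U) q :
  f (ch_zero L) = ch_zero M -> f (ch_one L) = ch_one M ->
  (forall a b, f (ch_join L a b) = ch_join M (f a) (f b)) ->
  (forall a b, f (ch_meet L a b) = ch_meet M (f a) (f b)) ->
  is_prime_filter M q -> is_prime_filter L (fun a => q (f a)).
Proof.
  intros f0 f1 fJ fM [q1 [q0 [qup [qmeet qjoin]]]]; repeat split.
  - rewrite f1; exact q1.
  - rewrite f0; exact q0.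
  - intros a b qa ab; apply (qup (f a)); [exact qa|unfold ch_le; rewrite <- fJ, ab; reflexivity].
  - intros a b qa qb; rewrite fM; exact (qmeet _ _ qa qb).
  - intros a b qab; rewrite fJ in qab; exact (qjoin _ _ qab).
Qed.

Lemma height_ge_comap {T U} (L : chops T) (M : chops U) (f : T -> U) (g : U -> T) p :
  (forall q, is_prime_filter M q -> is_prime_filter L (fun a => q (f a))) ->
  (forall q, is_prime_filter M q -> incl q p -> forall y, q y <-> q (f (g y))) ->
  forall n q, is_prime_filter M q -> incl q p -> height_ge M q n ->
    height_ge L (fun a => q (f a)) n.
Proof.
  intros comap trace n; induction n as [|n IH]; intros q hq qp hqn; [exact I|].
  destruct hqn as [r [hr [[rq [y [qy ry]]] hrn]]].
  assert (rp : incl r p) by (intros z rz; exact (qp z (rq z rz))).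
  exists (fun a => r (f a)); split; [exact (comap r hr)|split; [split|]].
  - intros a ra; exact (rq _ ra).
  - exists (g y); split; [exact (proj1 (trace q hq qp y) qy)|].
    intro h; exact (ry (proj2 (trace r hr rp y) h)).
  - exact (IH r hr rp hrn).
Qed.

Section ThreadPrime.
Context {T : Type} {L : chops T} (HL : is_coHeyting L).
Local Notation H := (hat_chops HL).
Variables (p : T -> Prop) (d : nat).
Hypotheses (hp : is_prime_filter L p) (p_dL : forall e, p e -> ~ in_dL L d e).

Lemma thread_prime_iff y a : proj1_sig y d = pi L d a -> (p (hat_repr y d) <-> p a).
Proof.
  intro ya; apply (prime_filter_congr HL (in_dL L d)); [apply in_dL_ideal|exact hp|exact p_dL|].
  unfold hat_repr; rewrite ya; apply (repr_pi HL).
Qed.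

Lemma thread_prime_filter : is_prime_filter H (fun y => p (hat_repr y d)).
Proof.
  repeat split.
  - rewrite (thread_prime_iff _ (ch_one L)) by reflexivity; apply prime_filter1, hp.
  - rewrite (thread_prime_iff _ (ch_zero L)) by reflexivity; apply prime_filter_not0, hp.
  - intros y y' py yy'; apply (proj1 (hat_le_iff HL y y')) with (d := d) in yy'.
    destruct (pi_surj d (proj1_sig y d)) as [a ya], (pi_surj d (proj1_sig y' d)) as [b yb].
    rewrite ya, yb, (quot_le_pi HL) in yy'.
    rewrite (thread_prime_iff _ _ ya) in py; rewrite (thread_prime_iff _ _ yb).
    destruct (prime_filter_join_diff HL p a b hp py) as [h|h]; [exact h|destruct (p_dL _ h yy')].
  - intros y y' py py'.
    destruct (pi_surj d (proj1_sig y d)) as [a ya], (pi_surj d (proj1_sig y' d)) as [b yb].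
    rewrite (thread_prime_iff _ (ch_meet L a b)) by (rewrite hat_meetE, ya, yb; apply (qmeet_pi HL)).
    rewrite (thread_prime_iff _ _ ya) in py; rewrite (thread_prime_iff _ _ yb) in py'.
    apply prime_filter_meet; assumption.
  - intros y y'.
    destruct (pi_surj d (proj1_sig y d)) as [a ya], (pi_surj d (proj1_sig y' d)) as [b yb].
    rewrite (thread_prime_iff _ (ch_join L a b)) by (rewrite hat_joinE, ya, yb; apply (qjoin_pi HL)).
    rewrite (thread_prime_iff _ _ ya), (thread_prime_iff _ _ yb).
    apply prime_filter_join, hp.
Qed.

Lemma thread_prime_trace q : is_prime_filter H q -> incl q (fun y => p (hat_repr y d)) ->
  forall y, q y <-> q (hconst HL (hat_repr y d)).
Proof.
  intros hq qp y.
  assert (ya : proj1_sig y d = pi L d (hat_repr y d)) by (symmetry; apply pi_repr).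
  assert (vanish : forall z, proj1_sig z d = pi L d (ch_diff L (hat_repr y d) (hat_repr y d)) -> ~ q z).
  { intros z hz qz; apply (prime_filter_not0 _ hp).
    rewrite <- (ch_diffxx HL (hat_repr y d)), <- (thread_prime_iff _ _ hz); exact (qp z qz). }
  apply (prime_filter_iff (hat_coHeyting HL)); [exact hq|apply vanish..].
  - rewrite hat_diffE, ya, hconstE; apply (qdiff_pi HL).
  - rewrite hat_diffE, ya, hconstE; apply (qdiff_pi HL).
Qed.

End ThreadPrime.

Fixpoint partial_join {T} (M : chops T) (b : T) (f : nat -> T) (n : nat) : T :=
  match n with
  | O => b
  | S k => ch_join M (partial_join M b f k) (f k)
  end.

Lemma in_dL_lift_sequence {T} {M : chops T} (HM : is_coHeyting M) d (a : nat -> T) :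
  in_dL M (S d) (a O) ->
  (forall e, in_dL M (S (Nat.max e d)) (ch_diff M (a (S e)) (a e))) ->
  exists B : nat -> T, (forall e, in_dL M d (B e)) /\
    (forall e, in_dL M e (sym_diff M (B (S e)) (B e))) /\
    (forall e, ch_le M (a e) (ch_diff M (B e) (a e))).
Proof.
  intros a0 ha.
  set (q := fun e => ch_diff M (a (S e)) (a e)).
  destruct (in_dL_succ_le_diff HM d (a O) a0) as [b0 [db0 hb0]].
  destruct (choice (fun e b => in_dL M (Nat.max e d) b /\ ch_le M (q e) (ch_diff M b (q e))))
    as [beta hbeta]; [intro e; exact (in_dL_succ_le_diff HM _ _ (ha e))|].
  set (s := partial_join M (a O) q); set (B := partial_join M b0 beta).
  assert (a_le_s : forall e, ch_le M (a e) (s e)).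
  { induction e as [|e IH]; [apply (ch_le_refl HM)|].
    apply (ch_le_trans HM _ _ _ (ch_le_join_diff HM (a (S e)) (a e))).
    apply (ch_join_mono HM); [exact IH|apply (ch_le_refl HM)]. }
  assert (s_le_diff : forall e, ch_le M (s e) (ch_diff M (B e) (s e))).
  { induction e as [|e IH]; [exact hb0|].
    apply (ch_le_diff_self_join HM).
    - apply (ch_le_diff_self_mono HM _ (B e)); [exact IH|apply (ch_le_joinl HM)].
    - apply (ch_le_diff_self_mono HM _ (beta e)); [apply hbeta|apply (ch_le_joinr HM)]. }
  exists B; split; [|split].
  - induction e as [|e IH]; [exact db0|].
    change (B (S e)) with (ch_join M (B e) (beta e)).
    apply (ideal_join _ (in_dL_ideal d)); [exact IH|].
    apply (in_dL_le d (Nat.max e d)); [lia|apply hbeta].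
  - intro e; change (B (S e)) with (ch_join M (B e) (beta e)).
    apply (congrE HM _ (in_dL_ideal e)); split.
    + apply (ideal_le _ (in_dL_ideal e) _ (beta e)).
      * rewrite (ch_diffUl HM), (ch_diffxx HM), (ch_join0x HM); apply (ch_le_diff HM).
      * apply (in_dL_le e (Nat.max e d)); [lia|apply hbeta].
    + rewrite (proj2 (ch_diff_eq0 HM _ _) (ch_le_joinl HM _ _)); apply ideal0, in_dL_ideal.
  - intro e; apply (ch_le_trans HM _ _ _ (a_le_s e)).
    apply (ch_le_trans HM _ _ _ (s_le_diff e)), (ch_diff_monor HM), a_le_s.
Qed.

Section ThreadCodimension.
Context {T : Type} {L : chops T} (HL : is_coHeyting L).
Local Notation H := (hat_chops HL).

Lemma hat_in_dL_component d x : in_dL H d x -> in_dL L d (hat_repr x d).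
Proof.
  intros hx p hp px.
  destruct (classic (exists e, p e /\ in_dL L d e)) as [[e [pe de]]|disj];
    [exact (de p hp pe)|].
  assert (p_dL : forall e, p e -> ~ in_dL L d e) by (intros e pe de; apply disj; eauto).
  replace p with (fun a => p (hat_repr (hconst HL a) d))
    by (apply pred_ext; intro a; apply (thread_prime_iff HL p d hp p_dL); reflexivity).
  set (P := fun y : hat L => p (hat_repr y d)).
  refine (height_ge_comap L H (hconst HL) (fun y : hat L => hat_repr y d) P _ _ d P _ _ _).
  - intros q hq; apply (prime_filter_comap L H); [reflexivity|reflexivity| | |exact hq];
      intros; symmetry; [apply hconst_join|apply hconst_meet].
  - apply (thread_prime_trace HL p d hp p_dL).
  - apply (thread_prime_filter HL p d hp p_dL).
  - intros y py; exact py.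
  - apply hx; [apply (thread_prime_filter HL p d hp p_dL)|exact px].
Qed.

Lemma hat_in_dL_of_component d : forall x, proj1_sig x d = pi L d (ch_zero L) -> in_dL H d x.
Proof.
  (* The representatives [a e] of the components of [x] lie in (d+1)L and agree modulo
     (max e d + 1)L; their lifted witnesses form a thread [v] in d(hat L) with [x <= v - x]. *)
  induction d as [|d IH]; intros x hx; [apply in_dL0|].
  set (a := fun e => hat_repr x (S (Nat.max e d))).
  assert (xa : forall e k, (k <= S (Nat.max e d))%nat -> pi L k (a e) = proj1_sig x k)
    by (intros; apply (hat_repr_pi HL); assumption).
  destruct (in_dL_lift_sequence HL d a) as [B [Bd [Bcoh aB]]].
  - apply (pi_eq0 HL); rewrite (xa O (S d)) by lia; exact hx.
  - intro e; apply (congrE HL _ (in_dL_ideal _)), (pi_eq HL).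
    rewrite xa, xa by lia; reflexivity.
  - assert (coh : forall e, pi_succ L e (pi L (S e) (B (S e))) = pi L e (B e))
      by (intro e; rewrite (pi_succ_pi HL); apply (pi_eq HL), Bcoh).
    apply (in_dL_succ_of_le_diff (hat_coHeyting HL) d x (mk_hat _ coh)).
    + apply IH; apply (pi_eq0 HL), Bd.
    + apply hat_le_iff; intro e; rewrite hat_diffE, <- (xa e e) by lia; cbn.
      rewrite (qdiff_pi HL), (quot_le_pi HL), (proj2 (ch_diff_eq0 HL _ _) (aB e)).
      apply ideal0, in_dL_ideal.
Qed.

Theorem hat_in_dLE d x : in_dL H d x <-> proj1_sig x d = pi L d (ch_zero L).
Proof.
  split; [|apply hat_in_dL_of_component].
  intro hx; rewrite <- (pi_repr d (proj1_sig x d)); apply (pi_eq0 HL), hat_in_dL_component, hx.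
Qed.

Lemma hat_sym_diff_in_dL d x y : in_dL H d (sym_diff H x y) <-> proj1_sig x d = proj1_sig y d.
Proof.
  rewrite hat_in_dLE; unfold sym_diff; rewrite hat_joinE, !hat_diffE.
  destruct (pi_surj d (proj1_sig x d)) as [a ->], (pi_surj d (proj1_sig y d)) as [b ->].
  rewrite !(qdiff_pi HL), (qjoin_pi HL), (pi_eq0 HL), (pi_eq HL); reflexivity.
Qed.

End ThreadCodimension.

(** * The codimension distance *)

Open Scope R_scope.

Lemma pow_half_pos n : 0 < (/ 2) ^ n.
Proof. apply pow_lt; lra. Qed.

Lemma pow_half_lt_succ n : (/ 2) ^ S n < (/ 2) ^ n.
Proof. cbn; pose proof (pow_half_pos n); lra. Qed.

Lemma pow_half_le_mono m n : (m <= n)%nat -> (/ 2) ^ n <= (/ 2) ^ m.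
Proof. intro mn; induction mn as [|n mn IH]; [lra|pose proof (pow_half_lt_succ n); lra]. Qed.

Lemma pow_half_le m n : (/ 2) ^ n <= (/ 2) ^ m <-> (m <= n)%nat.
Proof.
  split; [|apply pow_half_le_mono].
  intro h; apply Nat.nlt_ge; intro nm.
  pose proof (pow_half_le_mono (S n) m nm); pose proof (pow_half_lt_succ n); lra.
Qed.

Lemma pow_half_lt m n : (/ 2) ^ n < (/ 2) ^ m <-> (m < n)%nat.
Proof.
  split.
  - intro h; apply Nat.nle_gt; intro nm; pose proof (pow_half_le_mono n m nm); lra.
  - intro mn; pose proof (pow_half_le_mono (S m) n mn); pose proof (pow_half_lt_succ m); lra.
Qed.

Lemma pow_half_small eps : 0 < eps -> exists d, (/ 2) ^ d < eps.
Proof.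
  intro he; destruct (pow_lt_1_zero (/ 2)) with (y := eps) as [N HN];
    [rewrite Rabs_pos_eq; lra|exact he|].
  exists N; specialize (HN N (le_n N)); rewrite Rabs_pos_eq in HN; [exact HN|].
  left; apply pow_half_pos.
Qed.

Section CodimDist.
Context {T : Type} (M : chops T).

Lemma codim_dist_spec a b :
  (codim_dist M a b = 0 /\ forall d, in_dL M d (sym_diff M a b)) \/
  exists n, codim_dist M a b = (/ 2) ^ n /\ in_dL M n (sym_diff M a b) /\
    ~ in_dL M (S n) (sym_diff M a b).
Proof.
  unfold codim_dist; destruct (excluded_middle_informative _) as [h|h].
  - right; destruct (constructive_indefinite_description _ h) as [n [h1 h2]]; exists n; auto.
  - left; split; [reflexivity|].
    intro d; induction d as [|d IH]; [apply in_dL0|].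
    apply NNPP; intro nd; apply h; exists d; split; assumption.
Qed.

Lemma codim_dist_ge0 a b : 0 <= codim_dist M a b.
Proof.
  destruct (codim_dist_spec a b) as [[-> _]|[n [-> _]]]; [lra|left; apply pow_half_pos].
Qed.

Lemma codim_dist_le a b d : codim_dist M a b <= (/ 2) ^ d <-> in_dL M d (sym_diff M a b).
Proof.
  destruct (codim_dist_spec a b) as [[-> h]|[n [-> [hn hSn]]]].
  - split; [intros _; apply h|intros _; left; apply pow_half_pos].
  - rewrite pow_half_le; split; [intro dn; exact (in_dL_le d n _ dn hn)|].
    intro hd; apply Nat.nlt_ge; intro nd; exact (hSn (in_dL_le (S n) d _ nd hd)).
Qed.

Lemma codim_dist_lt a b d : codim_dist M a b < (/ 2) ^ d <-> in_dL M (S d) (sym_diff M a b).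
Proof.
  destruct (codim_dist_spec a b) as [[-> h]|[n [-> [hn hSn]]]].
  - split; [intros _; apply h|intros _; apply pow_half_pos].
  - rewrite pow_half_lt; split; [intro dn; exact (in_dL_le (S d) n _ dn hn)|].
    intro hd; apply Nat.nle_gt; intro nd; apply hSn, (in_dL_le (S n) (S d)); [lia|exact hd].
Qed.

Lemma codim_dist_eq0 a b : codim_dist M a b = 0 <-> forall d, in_dL M d (sym_diff M a b).
Proof.
  destruct (codim_dist_spec a b) as [[-> h]|[n [-> [hn hSn]]]].
  - tauto.
  - split; [pose proof (pow_half_pos n); lra|intro h; destruct (hSn (h (S n)))].
Qed.

End CodimDist.

Lemma codim_dist_ext {T U} (M : chops T) (N : chops U) a b a' b' :
  (forall d, in_dL M d (sym_diff M a b) <-> in_dL N d (sym_diff N a' b')) ->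
  codim_dist M a b = codim_dist N a' b'.
Proof.
  intro same.
  destruct (codim_dist_spec M a b) as [[-> h]|[n [-> [hn hSn]]]],
    (codim_dist_spec N a' b') as [[-> h']|[m [-> [hm hSm]]]].
  - reflexivity.
  - destruct hSm; apply same, h.
  - destruct hSn; apply same, h'.
  - f_equal; apply Nat.le_antisymm; apply Nat.nlt_ge; intro lt.
    + apply hSm, (in_dL_le (S m) n); [exact lt|apply same, hn].
    + apply hSn, (in_dL_le (S n) m); [exact lt|apply same, hm].
Qed.

Section CodimMetric.
Context {T : Type} {M : chops T} (HM : is_coHeyting M).

Lemma codim_dist_ultra a b c : codim_dist M a c <= Rmax (codim_dist M a b) (codim_dist M b c).
Proof.
  destruct (codim_dist_spec M a c) as [[-> _]|[n [-> [_ hSn]]]].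
  - apply (Rle_trans _ _ _ (codim_dist_ge0 M a b)), Rmax_l.
  - (* [a] and [c] are not congruent modulo (n+1)L, so neither are [a], [b] or [b], [c]. *)
    destruct (classic (in_dL M (S n) (sym_diff M a b))) as [ab|ab].
    + assert (bc : ~ in_dL M (S n) (sym_diff M b c))
        by (intro bc; exact (hSn (congr_trans HM _ (in_dL_ideal _) _ _ _ ab bc))).
      rewrite <- codim_dist_lt in bc; apply Rnot_lt_le in bc.
      apply (Rle_trans _ _ _ bc), Rmax_r.
    + rewrite <- codim_dist_lt in ab; apply Rnot_lt_le in ab.
      apply (Rle_trans _ _ _ ab), Rmax_l.
Qed.

Lemma codim_dist_metric :
  (forall a b, (forall d, in_dL M d (sym_diff M a b)) -> a = b) -> is_metric (codim_dist M).
Proof.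
  intro sep; repeat split.
  - apply codim_dist_ge0.
  - intro a; apply codim_dist_eq0; intro d.
    apply (congr_refl HM _ (in_dL_ideal d)).
  - intros a b; apply codim_dist_ext; intro d; unfold sym_diff; rewrite (ch_joinC HM); reflexivity.
  - intros a b c; apply (Rle_trans _ _ _ (codim_dist_ultra a b c)).
    pose proof (codim_dist_ge0 M a b); pose proof (codim_dist_ge0 M b c).
    apply Rmax_lub; lra.
  - intros a b h; apply sep, codim_dist_eq0, h.
Qed.

End CodimMetric.

(** * Completion and topology *)

Definition converges {X} (dX : X -> X -> R) (u : nat -> X) (l : X) : Prop :=
  forall eps, 0 < eps -> exists N, forall n, (N <= n)%nat -> dX (u n) l < eps.

Lemma converges_unique {X} (dX : X -> X -> R) u l l' :
  is_metric dX -> converges dX u l -> converges dX u l' -> l = l'.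
Proof.
  intros [pos [_ [sym [tri sep]]]] hl hl'; apply sep.
  destruct (Req_dec (dX l l') 0) as [e|ne]; [exact e|exfalso].
  assert (dpos : 0 < dX l l') by (pose proof (pos l l'); lra).
  destruct (hl (dX l l' / 2)) as [N hN]; [lra|].
  destruct (hl' (dX l l' / 2)) as [N' hN']; [lra|].
  specialize (hN _ (Nat.le_max_l N N')); specialize (hN' _ (Nat.le_max_r N N')).
  pose proof (tri l (u (Nat.max N N')) l'); pose proof (sym l (u (Nat.max N N'))); lra.
Qed.

Section Completion.
Context {T : Type} {L : chops T} (HL : is_coHeyting L).
Local Notation H := (hat_chops HL).
Local Notation io := (hconst HL).

Lemma hat_dist_le x y d : codim_dist H x y <= (/ 2) ^ d <-> proj1_sig x d = proj1_sig y d.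
Proof. rewrite codim_dist_le; apply (hat_sym_diff_in_dL HL). Qed.

Lemma dist_le_pi a b d : codim_dist L a b <= (/ 2) ^ d <-> pi L d a = pi L d b.
Proof. rewrite codim_dist_le, (pi_eq HL); reflexivity. Qed.

Lemma hat_metric : is_metric (codim_dist H).
Proof.
  apply (codim_dist_metric (hat_coHeyting HL)); intros x y h.
  apply hat_ext; intro d; apply (hat_sym_diff_in_dL HL), h.
Qed.

Lemma hat_complete : is_complete (codim_dist H).
Proof.
  intros u hu.
  assert (stable : forall d, exists N, forall n, (N <= n)%nat ->
            proj1_sig (u n) d = proj1_sig (u N) d).
  { intro d; destruct (hu _ (pow_half_pos d)) as [N hN]; exists N; intros n hn.
    apply hat_dist_le; left; apply hN; lia. }
  destruct (choice _ stable) as [N hN].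
  assert (coh : forall d, pi_succ L d (proj1_sig (u (N (S d))) (S d)) = proj1_sig (u (N d)) d).
  { intro d; set (k := Nat.max (N d) (N (S d))).
    rewrite <- (hN (S d) k), (proj2_sig (u k) d) by lia; apply hN; lia. }
  exists (mk_hat _ coh); intros eps he.
  destruct (pow_half_small eps he) as [d hd]; exists (N d); intros n hn.
  exact (Rle_lt_trans _ _ _ (proj2 (hat_dist_le (u n) (mk_hat _ coh) d) (hN d n hn)) hd).
Qed.

Lemma hconst_isometry a b : codim_dist H (io a) (io b) = codim_dist L a b.
Proof. apply codim_dist_ext; intro d; rewrite (hat_sym_diff_in_dL HL), !hconstE, (pi_eq HL); reflexivity. Qed.

Lemma hconst_continuous : continuous_m (codim_dist L) (codim_dist H) io.
Proof. intros a eps he; exists eps; split; [exact he|intros b hb; rewrite hconst_isometry; exact hb]. Qed.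

Lemma hconst_dense : dense_image (codim_dist H) io.
Proof.
  intros z eps he; destruct (pow_half_small eps he) as [d hd]; exists (hat_repr z d).
  refine (Rle_lt_trans _ _ _ (proj2 (hat_dist_le _ _ d) _) hd).
  rewrite hconstE; symmetry; apply pi_repr.
Qed.

Section Extension.
Variables (Y : Type) (dY : Y -> Y -> R) (f : T -> Y).
Hypotheses (HY : is_metric dY) (cY : is_complete dY)
  (hf : unif_continuous_m (codim_dist L) dY f).

Lemma extension_modulus eps : 0 < eps -> exists d, forall (z : hat L) a n,
  (d <= n)%nat -> pi L d a = proj1_sig z d -> dY (f (hat_repr z n)) (f a) < eps.
Proof.
  intro he; destruct (hf eps he) as [delta [hdelta hd]].
  destruct (pow_half_small delta hdelta) as [d hsmall]; exists d; intros z a n dn za.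
  apply hd; refine (Rle_lt_trans _ _ _ (proj2 (dist_le_pi _ _ d) _) hsmall).
  rewrite za; apply (hat_repr_pi HL), dn.
Qed.

Lemma repr_image_cauchy (z : hat L) : forall eps, 0 < eps -> exists N, forall m n,
  (N <= m)%nat -> (N <= n)%nat -> dY (f (hat_repr z m)) (f (hat_repr z n)) < eps.
Proof.
  intros eps he; destruct (extension_modulus eps he) as [d hd]; exists d; intros m n dm dn.
  apply hd; [exact dm|apply (hat_repr_pi HL), dn].
Qed.

Definition extension (z : hat L) : Y :=
  proj1_sig (constructive_indefinite_description _ (cY _ (repr_image_cauchy z))).

Lemma extension_converges z : converges dY (fun n => f (hat_repr z n)) (extension z).
Proof. unfold extension; destruct (constructive_indefinite_description _ _) as [l hl]; exact hl. Qed.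

Lemma extension_hconst a : extension (io a) = f a.
Proof.
  apply (converges_unique dY (fun n => f (hat_repr (io a) n))); [exact HY|apply extension_converges|].
  intros eps he; destruct (extension_modulus eps he) as [d hd]; exists d; intros n dn.
  apply hd; [exact dn|reflexivity].
Qed.

Lemma extension_continuous : continuous_m (codim_dist H) dY extension.
Proof.
  destruct HY as [_ [_ [sym [tri _]]]].
  intros x eps he; destruct (extension_modulus (eps / 3)) as [d hd]; [lra|].
  exists ((/ 2) ^ d); split; [apply pow_half_pos|intros y hxy].
  apply Rlt_le, hat_dist_le in hxy.
  destruct (extension_converges x (eps / 3)) as [N hN]; [lra|].
  destruct (extension_converges y (eps / 3)) as [N' hN']; [lra|].
  set (n := Nat.max d (Nat.max N N')).
  assert (dn : (d <= n)%nat) by (unfold n; lia).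
  specialize (hN n ltac:(unfold n; lia)); specialize (hN' n ltac:(unfold n; lia)).
  assert (close : dY (f (hat_repr x n)) (f (hat_repr y n)) < eps / 3).
  { apply hd; [exact dn|rewrite hxy; apply (hat_repr_pi HL), dn]. }
  pose proof (tri (extension x) (f (hat_repr x n)) (extension y)).
  pose proof (tri (f (hat_repr x n)) (f (hat_repr y n)) (extension y)).
  pose proof (sym (extension x) (f (hat_repr x n))); lra.
Qed.

Lemma extension_unique g : continuous_m (codim_dist H) dY g ->
  (forall a, g (io a) = f a) -> forall z, g z = extension z.
Proof.
  intros hg gf z; apply (converges_unique dY (fun n => f (hat_repr z n)));
    [exact HY| |apply extension_converges].
  intros eps he; destruct (hg z eps he) as [delta [hdelta hd]].
  destruct (pow_half_small delta hdelta) as [d hsmall]; exists d; intros n dn.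
  rewrite <- gf, (proj1 (proj2 (proj2 HY))); apply hd.
  refine (Rle_lt_trans _ _ _ (proj2 (hat_dist_le _ _ d) _) hsmall).
  rewrite hconstE, (hat_repr_pi HL z d n dn); reflexivity.
Qed.

End Extension.

Lemma hat_hausdorff_completion : is_hausdorff_completion (codim_dist L) (codim_dist H) io.
Proof.
  split; [exact hat_metric|split; [exact hat_complete|split; [exact hconst_continuous|]]].
  split; [exact hconst_dense|].
  intros Y dY HY cY f hf; exists (extension Y dY f cY hf); split; [|split].
  - apply extension_continuous; exact HY.
  - apply extension_hconst; exact HY.
  - intros g hg gf z; apply (extension_unique Y dY f HY cY hf g hg gf).
Qed.

Lemma metric_open_cylinder d (V : quot L d -> Prop) :
  metric_open (codim_dist H) (fun x => V (proj1_sig x d)).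
Proof.
  intros x Vx; exists ((/ 2) ^ d); split; [apply pow_half_pos|intros y hxy].
  apply Rlt_le, hat_dist_le in hxy; rewrite <- hxy; exact Vx.
Qed.

Lemma metric_open_proj_open U : metric_open (codim_dist H) U -> proj_open L U.
Proof.
  intros hU tau [_ [tau_union _]] tau_cyl.
  (* [U] is the union of the cylinders [{y | y_d = x_d}] it contains. *)
  set (cyl := fun (x : hat L) d (y : hat L) => proj1_sig y d = proj1_sig x d).
  replace U with (fun y => exists V, (exists x d, incl (cyl x d) U /\ V = cyl x d) /\ V y).
  - apply tau_union; intros V [x [d [_ ->]]].
    exact (tau_cyl d (fun X => X = proj1_sig x d)).
  - apply pred_ext; intro y; split.
    + intros [V [[x [d [xU ->]]] yV]]; exact (xU y yV).
    + intro Uy; destruct (hU y Uy) as [eps [he ball]].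
      destruct (pow_half_small eps he) as [d hd].
      exists (cyl y d); split; [exists y, d; split; [|reflexivity]|reflexivity].
      intros z hz; apply ball; refine (Rle_lt_trans _ _ _ (proj2 (hat_dist_le _ _ d) _) hd).
      symmetry; exact hz.
Qed.

End Completion.

Lemma metric_open_topology {X} (dX : X -> X -> R) : is_topology (metric_open dX).
Proof.
  split; [|split].
  - intros x _; exists 1; split; [lra|trivial].
  - intros F hF x [V [FV Vx]]; destruct (hF V FV x Vx) as [eps [he ball]].
    exists eps; split; [exact he|intros y hy; exists V; split; [exact FV|apply ball, hy]].
  - intros U V hU hV x [Ux Vx].
    destruct (hU x Ux) as [e [he bU]], (hV x Vx) as [e' [he' bV]].
    exists (Rmin e e'); split; [apply Rmin_pos; assumption|intros y hy; split].
    + apply bU, (Rlt_le_trans _ _ _ hy), Rmin_l.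
    + apply bV, (Rlt_le_trans _ _ _ hy), Rmin_r.
Qed.

Lemma proj_open_iff_metric_open {T} {L : chops T} (HL : is_coHeyting L) (U : hat L -> Prop) :
  proj_open L U <-> metric_open (codim_dist (hat_chops HL)) U.
Proof.
  split; [|apply metric_open_proj_open].
  intro hU; apply hU; [apply metric_open_topology|apply metric_open_cylinder].
Qed.

Theorem theorem7p2 (T : Type) (L : chops T) (HL : is_coHeyting L) :
  exists (iota : T -> hat L) (H : chops (hat L)),
    (forall a d, proj1_sig (iota a) d = pi L d a) /\
    (forall d, proj1_sig (ch_zero H) d = pi L d (ch_zero L)) /\
    (forall d, proj1_sig (ch_one H) d = pi L d (ch_one L)) /\
    (forall x y d, proj1_sig (ch_join H x y) d = qjoin L d (proj1_sig x d) (proj1_sig y d)) /\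
    (forall x y d, proj1_sig (ch_meet H x y) d = qmeet L d (proj1_sig x d) (proj1_sig y d)) /\
    (forall x y d, proj1_sig (ch_diff H x y) d = qdiff L d (proj1_sig x d) (proj1_sig y d)) /\
    is_coHeyting H /\
    is_hausdorff_completion (codim_dist L) (codim_dist H) iota /\
    (forall U : hat L -> Prop, proj_open L U <-> metric_open (codim_dist H) U).
Proof.
  exists (hconst HL), (hat_chops HL).
  split; [apply hconstE|split; [apply hat_zeroE|split; [apply hat_oneE|]]].
  split; [apply hat_joinE|split; [apply hat_meetE|split; [apply hat_diffE|]]].
  split; [exact (hat_coHeyting HL)|split].
  - exact (hat_hausdorff_completion HL).
  - exact (proj_open_iff_metric_open HL).
Qed.
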